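(* Let $m_c\in H$ be such that for every $\lambda\in\Lambda$ the local component has the form $m_\lambda=Y\,f_\lambda$ with $f_\lambda$ a power series in $s_\lambda$ (i.e. $G_0^\lambda=0$ for all $\lambda$). Write $f_\infty=\sum_{\ell\ge0}a_\ell s_\infty^\ell$ (with $a_0=0$). If $a_\ell=0$ for $\ell=0,1,\dots,2g+1$, then $m_c=0$.
   Context: Standing setup. Let $k$ be a finite field of odd characteristic $p$, $W(k)$ its ring of Witt vectors, $K$ the fraction field of $W(k)$, $|\cdot|$ the $p$-adic absolute value. Let $g\ge1$ and let $\lambda_1,\dots,\lambda_{2g+1}\in W(k)$ have pairwise distinct reductions modulo $p$. Put $Q(t)=\prod_{i=1}^{2g+1}(t-\lambda_i)$ and $h(t)=\frac{Q'(t)}{2Q(t)}$. Let $\Lambda=\{\lambda_1,\dots,\lambda_{2g+1},\infty\}$, $\Lambda_0=\Lambda\setminus\{\infty\}$. The local parameter at $\lambda\in\Lambda_0$ is $s_\lambda=t-\lambda$, and at $\infty$ it is $s_\infty=t^{-1}$. Let $B_K^\dagger$ be the ring of series $\sum_{\underline\ell\ge0}a_{\underline\ell}\,t^{\ell_0}\prod_{i}(t-\lambda_i)^{-\ell_i}$ ($a_{\underline\ell}\in K$) for which there is $\eta>1$ with $|a_{\underline\ell}|\eta^{\max_i\ell_i}\to0$; $\phi_\lambda(f)$ is the Laurent expansion of $f\in B_K^\dagger$ in $s_\lambda$. The principal part is $\Pr_\lambda(\sum a_\ell s_\lambda^\ell)=\sum_{\ell<0}a_\ell s_\lambda^\ell$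 for $\lambda\in\Lambda_0$ and $\Pr_\infty(\sum a_\ell s_\infty^\ell)=\sum_{\ell\le0}a_\ell s_\infty^\ell$; its expansion at another point $\mu$ is denoted $\phi_\mu(\cdot)$. For $\lambda\in\Lambda_0$, $\tilde R_{\lambda,c}$ is the space of $\sum_{\ell\ge0}a_\ell s_\lambda^\ell$ with $|a_\ell|\eta^\ell\to0$ for all $\eta<1$, and $R_{\infty,c}$ the analogous space of $\sum_{\ell\ge1}a_\ell s_\infty^\ell$. $B_c=\prod_{\lambda\in\Lambda_0}\tilde R_{\lambda,c}\times R_{\infty,c}$ is a $B_K^\dagger$-module via $(f\cdot G)^\mu=\phi_\mu(f)G^\mu-\sum_{\lambda\in\Lambda}\phi_\mu\big(\Pr_\lambda(\phi_\lambda(f)G^\lambda)\big)$. Let $A_K^\dagger=B_K^\dagger\oplus B_K^\dagger Y$ with $Y^2=Q(t)$, $\nabla_{GM}(1)=0$, $\nabla_{GM}(Y)=hY$; $M_c=A_K^\dagger\otimes_{B_K^\dagger}B_c$ with elements $m_c=1\otimes G_0+Y\otimes G_1$ ($G_0,G_1\in B_c$) and $\nabla_c(m_c)=1\otimes\partial_tG_0+Y\otimes(\partial_tG_1+h\cdot G_1)$, $\partial_t$ acting componentwise (as $-s_\infty^2\,d/ds_\infty$ on series in $s_\infty$). $H=\ker\nabla_c$ (the space $H^1_{MW,c}(V,\pi_*A_K^\dagger)$). Local components: $m_\lambda=G_0^\lambda+YG_1^\lambda$. *)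

From Stdlib Require Import Reals.
From HB Require Import structures.
From mathcomp Require Import all_boot all_order all_algebra all_field.
Set Implicit Arguments. Unset Strict Implicit. Unset Printing Implicit Defensive.
Import Order.TTheory GRing.Theory Num.Theory.
Local Open Scope ring_scope.

(* The field K = Frac W(k), characterised (Cohen structure theorem) as a      *)
(* complete discretely valued field of characteristic 0, unramified over Q_p  *)
(* (|p| = 1/p, value group p^Z) whose residue field is the finite field k    *)
(* (of characteristic p, p odd prime), via a residue map res : O_K -> k.      *)
Definition WittFrac (p : nat) (k : finFieldType) (K : fieldType)
    (absK : K -> R) (res : K -> k) : Prop :=
  [/\ (prime p /\ odd p) /\ p \in [pchar k] /\ [pchar K] =i pred0,
      (forall x : K, absK x = R0 <-> x = 0) /\
      (forall x y : K, absK (x * y) = Rmult (absK x) (absK y)) /\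
      (forall x y : K, Rle (absK (x + y)) (Rmax (absK x) (absK y))) /\
      absK (p%:R) = Rinv (INR p) /\
      (forall x : K, x <> 0 -> exists n : Z, absK x = powerRZ (INR p) n),
      (forall u : nat -> K,
         (forall eps : R, Rlt R0 eps -> exists N : nat, forall n m : nat,
            (N <= n)%N -> (N <= m)%N -> Rlt (absK (u n - u m)) eps) ->
         exists l : K, forall eps : R, Rlt R0 eps -> exists N : nat,
            forall n : nat, (N <= n)%N -> Rlt (absK (u n - l)) eps) &
      (* residue map O_K -> k : surjective ring morphism with kernel the maximal ideal *)
      [/\ res 1 = 1,
          (forall x y, Rle (absK x) R1 -> Rle (absK y) R1 -> res (x + y) = res x + res y),
          (forall x y, Rle (absK x) R1 -> Rle (absK y) R1 -> res (x * y) = res x * res y),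
          (forall x, Rle (absK x) R1 -> (res x = 0 <-> Rlt (absK x) R1)) &
          (forall a : k, exists x, Rle (absK x) R1 /\ res x = a)]].

Section Series.
Variable K : fieldType.

(* formal power series = coefficient sequences *)
Definition conv (u w : nat -> K) : nat -> K :=
  fun n => \sum_(i < n.+1) u i * w (n - i)%N.

(* inverse of a power series with invertible constant term *)
Fixpoint inv_list (u : nat -> K) (n : nat) : seq K :=
  match n with
  | 0 => [:: (u 0%N)^-1]
  | n'.+1 => let w := inv_list u n' in
      rcons w (- (u 0%N)^-1 * \sum_(i < n'.+1) u i.+1 * nth 0 w (n' - i)%N)
  end.
Definition ps_inv (u : nat -> K) : nat -> K := fun n => nth 0 (inv_list u n) n.

(* Laurent series sum_n lcoef n * s^(n + lval) *)
Record laurent := Laurent { lval : int; lcoef : nat -> K }.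

Definition lcoefZ (L : laurent) (l : int) : K :=
  match l - lval L with Posz n => lcoef L n | Negz _ => 0 end.

Definition ps_coefZ (G : nat -> K) (l : int) : K :=
  match l with Posz n => G n | Negz _ => 0 end.

Definition mulLP (L : laurent) (G : nat -> K) : laurent :=
  Laurent (lval L) (conv (lcoef L) G).

(* rational functions A/B, A B : {poly K}, B <> 0 *)
Definition ratf := ({poly K} * {poly K})%type.

(* expansion at a finite point mu in s = t - mu *)
Definition phi_fin (mu : K) (f : ratf) : laurent :=
  let A' := f.1 \Po ('X + mu%:P) in
  let B' := f.2 \Po ('X + mu%:P) in
  let e := find (fun c => c != 0) B' in
  Laurent (- (e%:Z)) (conv (fun n => A'`_n) (ps_inv (fun n => B'`_(n + e)))).

(* expansion at infinity in s = t^{-1} *)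
Definition rev_coef (A : {poly K}) : nat -> K :=
  fun n => if (n < size A)%N then A`_((size A).-1 - n) else 0.
Definition phi_inf (f : ratf) : laurent :=
  Laurent ((size f.2)%:Z - (size f.1)%:Z)
          (conv (rev_coef f.1) (ps_inv (rev_coef f.2))).

Definition negord (L : laurent) : nat :=
  match lval L with Posz _ => 0%N | Negz n => n.+1 end.

Definition Pr_fin (lam : K) (L : laurent) : ratf :=
  let e := negord L in
  (\sum_(j < e) lcoefZ L (- (j.+1)%:Z) *: ('X - lam%:P) ^+ (e - j.+1)%N,
   ('X - lam%:P) ^+ e).

(* principal part at infinity (terms s^l, l <= 0), a polynomial in t *)
Definition Pr_inf (L : laurent) : ratf :=
  (\sum_(j < (negord L).+1) lcoefZ L (- (j%:Z)) *: 'X^j, 1).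

End Series.

Section Curve.
Variables (K : fieldType) (n : nat) (lam : 'I_n -> K).
(* points of Lambda: Some i = lambda_i, None = infinity *)
Definition pt := option 'I_n.

Definition phi (mu : pt) (f : ratf K) : laurent K :=
  match mu with Some i => phi_fin (lam i) f | None => phi_inf f end.
Definition Pr (mu : pt) (L : laurent K) : ratf K :=
  match mu with Some i => Pr_fin (lam i) L | None => Pr_inf L end.

(* an element of B_c : one series per point of Lambda *)
Definition compfam := pt -> nat -> K.

Definition act (f : ratf K) (G : compfam) (mu : pt) : int -> K :=
  fun l => lcoefZ (mulLP (phi mu f) (G mu)) l
           - \sum_(la : pt) lcoefZ (phi mu (Pr la (mulLP (phi la f) (G la)))) l.

(* d/dt componentwise; at infinity it is -s^2 d/ds *)
Definition dt (mu : pt) (G : nat -> K) : nat -> K :=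
  match mu with
  | Some _ => fun m => (m.+1)%:R * G m.+1
  | None => fun m => match m with 0%N | 1%N => 0 | m'.+2 => - ((m'.+1)%:R * G m'.+1) end
  end.

Definition Qpoly : {poly K} := \prod_(i < n) ('X - (lam i)%:P).
Definition hrat : ratf K := (Qpoly^`(), 2%:R *: Qpoly).

(* m_c = 1 (x) G0 + Y (x) G1 lies in ker nabla_c *)
Definition in_H (G0 G1 : compfam) : Prop :=
  (forall mu m, dt mu (G0 mu) m = 0) /\
  (forall mu (l : int), ps_coefZ (dt mu (G1 mu)) l + act hrat G1 mu l = 0).
End Curve.

Definition in_Bc (K : fieldType) (absK : K -> R) (n : nat) (G : option 'I_n -> nat -> K) : Prop :=
  (forall (i : 'I_n) (eta : R), Rlt R0 eta -> Rlt eta R1 ->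
     Un_cv (fun l => Rmult (absK (G (Some i) l)) (pow eta l)) R0) /\
  G None 0%N = 0 /\
  (forall eta : R, Rlt R0 eta -> Rlt eta R1 ->
     Un_cv (fun l => Rmult (absK (G None l)) (pow eta l)) R0).

From Stdlib Require Import Reals.
From HB Require Import structures.
From mathcomp Require Import all_boot all_order all_algebra all_field ring.
Set Implicit Arguments. Unset Strict Implicit. Unset Printing Implicit Defensive.
Import Order.TTheory GRing.Theory Num.Theory.
Local Open Scope ring_scope.

(* Put n = 2g+1 and h = Q'/(2Q).  The equation  d_t G1 + h . G1 = 0  is read
   coefficient by coefficient at each point of Lambda, using that h has a
   simple pole with residue 1/2 at every lambda_i and expands as (n/2) s + ...
   at infinity, so that the only principal parts entering  h . G1  are the
   simple poles  (G1^{lambda_j}(0)/2) / (t - lambda_j).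
   1. At infinity the coefficients of s^1, ..., s^n give a Vandermonde system
      sum_j G1^{lambda_j}(0) lambda_j^k = 0 (k < n), because the local part
      of G1 at infinity vanishes up to order n; hence all residues vanish.
   2. With the residues gone, the coefficient of s^(m-1) at lambda_i reads
      (m + 1/2) a_m = 0 modulo lower coefficients, so G1^{lambda_i} = 0.
   3. At infinity the coefficient of s^(m+1) reads (n/2 - m) a_m = 0 modulo
      lower coefficients, and n/2 is not an integer since n is odd. *)

Lemma big_option (K : fieldType) (I : finType) (F : option I -> K) :
  \sum_x F x = F None + \sum_i F (Some i).
Proof.
rewrite -big_enum /=.
have -> : enum {: option I} = None :: map Some (enum I).
  by rewrite !enumT [in LHS]unlock.
by rewrite big_cons big_map big_enum.
Qed.

Section FormalSeries.
Variable K : fieldType.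
Implicit Types (u w : nat -> K).

Lemma inv_list_size u n : size (inv_list u n) = n.+1.
Proof. by elim: n => [|n IH] //=; rewrite size_rcons IH. Qed.

Lemma inv_list_nth u n m : (m <= n)%N -> nth 0 (inv_list u n) m = ps_inv u m.
Proof.
elim: n => [|n IH]; first by rewrite leqn0 => /eqP ->.
rewrite leq_eqVlt => /orP [/eqP -> //|lt_mn].
by rewrite /= nth_rcons inv_list_size lt_mn IH.
Qed.

Lemma ps_invS u n : ps_inv u n.+1 =
  - (u 0%N)^-1 * \sum_(i < n.+1) u i.+1 * ps_inv u (n - i)%N.
Proof.
rewrite /ps_inv /= nth_rcons inv_list_size ltnn eqxx.
congr (_ * _); apply: eq_bigr => i _; congr (_ * _).
by rewrite inv_list_nth // leq_subr.
Qed.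

Lemma ps_inv_geom u a : u 0%N = 1 -> u 1%N = - a -> (forall i, u i.+2 = 0) ->
  forall n, ps_inv u n = a ^+ n.
Proof.
move=> u0 u1 u2; elim=> [|n IH]; first by rewrite /ps_inv /= u0 invr1 expr0.
rewrite ps_invS big_ord_recl /= u1 subn0 IH big1 ?addr0.
  by rewrite u0 invr1 mulN1r mulNr opprK exprS.
by move=> i _; rewrite u2 mul0r.
Qed.

Lemma conv0 u w : conv u w 0 = u 0%N * w 0%N.
Proof. by rewrite /conv big_ord1. Qed.

Lemma conv_const u w c : u 0%N = c -> (forall i, u i.+1 = 0) ->
  forall n, conv u w n = c * w n.
Proof.
move=> u0 uS n; rewrite /conv big_ord_recl /= u0 subn0 big1 ?addr0 //.
by move=> i _; rewrite uS mul0r.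
Qed.

Lemma conv0l u w : (forall j, u j = 0) -> forall n, conv u w n = 0.
Proof. by move=> u0 n; rewrite /conv big1 // => i _; rewrite u0 mul0r. Qed.

Lemma conv_vanish u w m : (forall j, (j <= m)%N -> w j = 0) ->
  forall n, (n <= m)%N -> conv u w n = 0.
Proof.
move=> w0 n le_nm; rewrite /conv big1 // => i _; rewrite w0 ?mulr0 //.
exact: leq_trans (leq_subr _ _) le_nm.
Qed.

Lemma conv_lead u w m : (forall j, (j < m)%N -> w j = 0) ->
  conv u w m = u 0%N * w m.
Proof.
move=> w0; rewrite /conv big_ord_recl /= subn0 big1 ?addr0 // => i _.
rewrite w0 ?mulr0 // /bump /= add1n.
by case: m w0 i => [|m] _ [i lt_i] //; rewrite subSS ltnS leq_subr.
Qed.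

Lemma lcoefZ0 (L : laurent K) l : (forall j, lcoef L j = 0) -> lcoefZ L l = 0.
Proof. by rewrite /lcoefZ; case: (l - lval L). Qed.

Lemma lcoefZ_val1 (L : laurent K) m :
  lval L = 1 -> lcoefZ L (Posz m.+1) = lcoef L m.
Proof. by rewrite /lcoefZ => ->; rewrite /= subn1. Qed.

Lemma lcoefZ_valN1 (L : laurent K) m :
  lval L = - (1%:Z) -> lcoefZ L (Posz m - 1) = lcoef L m.
Proof. by rewrite /lcoefZ => ->; rewrite opprK subrK. Qed.

Lemma find_simple_zero (P : {poly K}) :
  P`_0 = 0 -> P`_1 != 0 -> find (fun c => c != 0) P = 1%N.
Proof.
case: P => [s _] /=; case: s => [|x [|y r]] /=; rewrite ?eqxx //.
by move=> -> y0; rewrite eqxx /= y0.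
Qed.

Lemma coef0_shift (P : {poly K}) c : (P \Po ('X + c%:P))`_0 = P.[c].
Proof. by rewrite -horner_coef0 horner_comp hornerD hornerX hornerC add0r. Qed.

Lemma coef1_shift (P : {poly K}) c : (P \Po ('X + c%:P))`_1 = P^`().[c].
Proof.
have := coef_deriv (P \Po ('X + c%:P)) 0; rewrite mulr1n => <-.
rewrite -horner_coef0 deriv_comp derivD derivX derivC addr0 mulr1.
by rewrite horner_comp hornerD hornerX hornerC add0r.
Qed.

End FormalSeries.

Section CharacteristicZero.
Variable K : fieldType.
Hypothesis char0 : [pchar K] =i pred0.

Lemma natr_neq0_pchar0 m : (m%:R != 0 :> K) = (m != 0%N).
Proof. by rewrite (pcharf0P K).1. Qed.

Lemma natr_eq_pchar0 a b : (a%:R == b%:R :> K) = (a == b).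
Proof.
wlog le_ab : a b / (a <= b)%N.
  move=> W; case: (leqP a b) => [|/ltnW] h; last rewrite eq_sym [(a == b)]eq_sym.
    by apply: W.
  by apply: W.
rewrite -subr_eq0 -opprB -natrB // oppr_eq0 (pcharf0P K).1 // subn_eq0.
by rewrite eqn_leq le_ab.
Qed.

(* Half an odd integer is never an integer: the non-resonance fact behind
   steps 2 and 3. *)
Lemma odd_half_sub_nat_neq0 a b : odd a -> (a%:R / 2%:R - b%:R : K) != 0.
Proof.
move=> odd_a; have two0 : (2%:R : K) != 0 by rewrite natr_neq0_pchar0.
have -> : (a%:R / 2%:R - b%:R : K) = (a%:R - (b.*2)%:R) / 2%:R.
  by rewrite -mul2n natrM; field.
rewrite mulf_eq0 invr_eq0 (negbTE two0) orbF subr_eq0 natr_eq_pchar0.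
by apply: contraL odd_a => /eqP ->; rewrite odd_double.
Qed.

End CharacteristicZero.

Section Expansions.
Variables (K : fieldType) (n : nat) (lam : 'I_n -> K).
Hypothesis char0 : [pchar K] =i pred0.
Hypothesis lam_inj : forall i j, i != j -> lam i != lam j.

Local Notation Q := (Qpoly lam).
Local Notation h := (hrat lam).

Lemma size_Q : size Q = n.+1.
Proof. by rewrite /Qpoly size_prod_XsubC /index_enum -enumT size_enum_ord. Qed.

Lemma monic_Q : Q \is monic.
Proof. exact: monic_prod_XsubC. Qed.

Lemma lead_Q : Q`_n = 1.
Proof. by have /monicP := monic_Q; rewrite lead_coefE size_Q. Qed.

Lemma root_Q i : Q.[lam i] = 0.
Proof. by rewrite /Qpoly horner_prod (bigD1 i) //= hornerXsubC subrr mul0r. Qed.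

Lemma prod_others_neq0 i :
  (\prod_(j | j != i) ('X - (lam j)%:P)).[lam i] != 0.
Proof.
rewrite horner_prod prodf_seq_neq0; apply/allP => j _; apply/implyP => ji.
by rewrite hornerXsubC subr_eq0 eq_sym lam_inj.
Qed.

Lemma deriv_Q_neq0 i : Q^`().[lam i] != 0.
Proof.
rewrite /Qpoly (bigD1 i) //= derivM derivXsubC mul1r hornerD hornerM.
by rewrite hornerXsubC subrr mul0r addr0; exact: prod_others_neq0.
Qed.

Lemma lead_deriv_Q : (0 < n)%N -> Q^`()`_(n.-1) = n%:R.
Proof. by move=> n0; rewrite coef_deriv prednK // lead_Q. Qed.

Lemma size_deriv_Q : (0 < n)%N -> size Q^`() = n.
Proof.
move=> n0; apply/eqP; rewrite eqn_leq; apply/andP; split.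
  by have := lt_size_deriv (monic_neq0 monic_Q); rewrite size_Q.
have nz : Q^`()`_(n.-1) != 0 by rewrite lead_deriv_Q // natr_neq0_pchar0 // -lt0n.
rewrite leqNgt; apply: contra nz => lt_size.
have /leq_sizeP/(_ _ (leqnn _)) -> // : (size Q^`() <= n.-1)%N.
by rewrite -ltnS prednK.
Qed.

Lemma h_at_finite_point i : lval (phi_fin (lam i) h) = - (1%:Z) /\
  lcoef (phi_fin (lam i) h) 0 = 2%:R^-1.
Proof.
have two0 : (2%:R : K) != 0 by rewrite natr_neq0_pchar0.
have B0 : ((2%:R *: Q) \Po ('X + (lam i)%:P))`_0 = 0.
  by rewrite coef0_shift hornerZ root_Q mulr0.
have B1 : ((2%:R *: Q) \Po ('X + (lam i)%:P))`_1 = 2%:R * Q^`().[lam i].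
  by rewrite coef1_shift derivZ hornerZ.
rewrite /phi_fin /= find_simple_zero //; last first.
  by rewrite B1 mulf_neq0 ?deriv_Q_neq0.
split=> //; rewrite conv0 /ps_inv /= add0n B1 coef0_shift.
by rewrite invfM mulrCA divff ?mulr1 ?deriv_Q_neq0.
Qed.

Lemma h_at_infinity : (0 < n)%N ->
  lval (phi_inf h) = 1 /\ lcoef (phi_inf h) 0 = n%:R / 2%:R.
Proof.
move=> n0; have two0 : (2%:R : K) != 0 by rewrite natr_neq0_pchar0.
rewrite /phi_inf /= size_scale // size_Q size_deriv_Q //; split.
  by rewrite -addn1 PoszD addrAC subrr add0r.
rewrite conv0 /ps_inv /= /rev_coef size_scale // size_Q size_deriv_Q // n0 /=.
by rewrite !subn0 lead_deriv_Q // coefZ lead_Q mulr1.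
Qed.

Lemma phi_num0 mu (B : {poly K}) j : lcoef (phi lam mu (0, B)) j = 0.
Proof.
case: mu => [i|] /=; rewrite /phi_fin /phi_inf /=; apply: conv0l => m.
  by rewrite comp_poly0 coef0.
by rewrite /rev_coef size_poly0.
Qed.

Lemma simple_pole_at_infinity (c a : K) k :
  lcoefZ (phi_inf (c%:P, 'X - a%:P)) (Posz k.+1) = c * a ^+ k.
Proof.
have [->|c0] := eqVneq c 0.
  rewrite mul0r lcoefZ0 // => j; apply: conv0l => m.
  by rewrite /rev_coef polyC0 size_poly0.
rewrite /lcoefZ /phi_inf /= size_XsubC size_polyC c0 /= subn1 /=.
rewrite (@conv_const _ _ _ c); first last.
- by move=> i; rewrite /rev_coef size_polyC c0.
- by rewrite /rev_coef size_polyC c0 /= coefC.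
congr (_ * _); apply: ps_inv_geom; rewrite /rev_coef size_XsubC //=.
  by rewrite coefB coefX coefC subr0.
by rewrite coefB coefX coefC sub0r.
Qed.

(* Since h . G has valuation >= 1 at infinity, its principal part there is 0. *)
Lemma Pr_h_at_infinity (G : nat -> K) : (0 < n)%N ->
  Pr lam None (mulLP (phi lam None h) G) = (0, 1).
Proof.
move=> n0; have [val1 _] := h_at_infinity n0.
have val1' : lval (mulLP (phi lam None h) G) = 1 := val1.
by rewrite /Pr /Pr_inf /negord val1' big_ord1 /lcoefZ val1' /= scale0r.
Qed.

Lemma Pr_h_at_finite_point i (G : nat -> K) :
  Pr lam (Some i) (mulLP (phi lam (Some i) h) G) =
  ((2%:R^-1 * G 0%N)%:P, 'X - (lam i)%:P).
Proof.
have [valN1 lead] := h_at_finite_point i.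
have valN1' : lval (mulLP (phi lam (Some i) h) G) = - (1%:Z) := valN1.
have lead' : lcoef (mulLP (phi lam (Some i) h) G) 0 = 2%:R^-1 * G 0%N.
  by rewrite -lead; exact: conv0.
rewrite /Pr /Pr_fin /negord valN1' big_ord1 /lcoefZ valN1'.
change ((lcoef (mulLP (phi lam (Some i) h) G) 0 *: ('X - (lam i)%:P) ^+ 0,
   ('X - (lam i)%:P) ^+ 1) = ((2%:R^-1 * G 0%N)%:P, 'X - (lam i)%:P)).
by rewrite lead' expr1 expr0 alg_polyC.
Qed.

(* Injectivity of the Vandermonde matrix at distinct nodes, proved by
   evaluating the interpolation polynomial prod_{j <> i} (t - lam j). *)
Lemma vandermonde_inj (c : 'I_n -> K) :
  (forall k, (k < n)%N -> \sum_j c j * lam j ^+ k = 0) -> forall i, c i = 0.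
Proof.
move=> moments0 i; pose P := \prod_(j | j != i) ('X - (lam j)%:P).
have size_P : (size P <= n)%N.
  have P_monic : P \is monic by apply: monic_prod => j _; exact: monicXsubC.
  have := size_Q; rewrite /Qpoly (bigD1 i) //= size_Mmonic ?polyXsubC_eq0 //.
  by rewrite size_XsubC add2n => [[->]].
have P_root j : j != i -> P.[lam j] = 0.
  by move=> ji; rewrite horner_prod (bigD1 j) //= hornerXsubC subrr mul0r.
have : \sum_j c j * P.[lam j] = 0.
  under eq_bigr => j _ do rewrite (horner_coef_wide _ size_P) mulr_sumr.
  rewrite exchange_big /= big1 // => k _.
  under eq_bigr => j _ do rewrite mulrCA.
  by rewrite -mulr_sumr moments0 ?mulr0.
rewrite (bigD1 i) //= big1 ?addr0 => [/eqP|j ji]; last by rewrite P_root ?mulr0.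
by rewrite mulf_eq0 (negbTE (prod_others_neq0 i)) orbF => /eqP.
Qed.

Local Notation principal_parts mu G l :=
  (\sum_la lcoefZ (phi lam mu (Pr lam la (mulLP (phi lam la h) (G la)))) l).

Lemma principal_parts0 mu l (G : option 'I_n -> nat -> K) : (0 < n)%N ->
  (forall j, G (Some j) 0%N = 0) -> principal_parts mu G l = 0.
Proof.
move=> n0 res0; apply: big1 => [[j|]] _.
  by rewrite Pr_h_at_finite_point res0 mulr0 polyC0 lcoefZ0 // => m; exact: phi_num0.
by rewrite Pr_h_at_infinity // lcoefZ0 // => m; exact: phi_num0.
Qed.

Lemma principal_parts_at_infinity k (G : option 'I_n -> nat -> K) :
  (0 < n)%N ->
  principal_parts None G (Posz k.+1) = \sum_j (2%:R^-1 * G (Some j) 0%N) * lam j ^+ k.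
Proof.
move=> n0; rewrite big_option Pr_h_at_infinity // lcoefZ0 ?add0r.
  by apply: eq_bigr => j _; rewrite Pr_h_at_finite_point simple_pole_at_infinity.
by move=> m; exact: phi_num0.
Qed.

End Expansions.

Section HorizontalSections.
Variables (K : fieldType) (n : nat) (lam : 'I_n -> K).
Variable G1 : option 'I_n -> nat -> K.
Hypothesis char0 : [pchar K] =i pred0.
Hypothesis lam_inj : forall i j, i != j -> lam i != lam j.
Hypothesis n_gt0 : (0 < n)%N.
(* The Y-component of  nabla_c m_c = 0. *)
Hypothesis horizontal : forall mu (l : int),
  ps_coefZ (dt mu (G1 mu)) l + act lam (hrat lam) G1 mu l = 0.

Let two_neq0 : (2%:R : K) != 0. Proof. by rewrite natr_neq0_pchar0. Qed.

Lemma residues_vanish : (forall l, (l <= n)%N -> G1 None l = 0) ->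
  forall j, G1 (Some j) 0%N = 0.
Proof.
move=> inf0 j; suff /eqP : 2%:R^-1 * G1 (Some j) 0%N = 0.
  by rewrite mulf_eq0 invr_eq0 (negbTE two_neq0) => /eqP.
apply: (vandermonde_inj lam_inj (c := fun j => 2%:R^-1 * G1 (Some j) 0%N)) => m lt_mn.
have [val1 _] := h_at_infinity lam char0 n_gt0.
have dt0 : ps_coefZ (dt None (G1 None)) m.+1 = 0.
  by case: m lt_mn => [|m] lt_mn //=; rewrite inf0 ?mulr0 ?oppr0 // ltnW.
have local0 : lcoefZ (mulLP (phi lam None (hrat lam)) (G1 None)) m.+1 = 0.
  rewrite lcoefZ_val1 //; apply: (@conv_vanish _ _ _ m) => // l le_lm.
  by rewrite inf0 // (leq_trans le_lm (ltnW lt_mn)).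
have := horizontal None (Posz m.+1).
rewrite /act dt0 local0 principal_parts_at_infinity // add0r sub0r.
by move/eqP; rewrite oppr_eq0 => /eqP.
Qed.

Lemma finite_components_vanish : (forall j, G1 (Some j) 0%N = 0) ->
  forall i m, G1 (Some i) m = 0.
Proof.
move=> res0 i; elim/ltn_ind => m IH.
case: m IH => [|m] IH; first exact: res0.
have [valN1 lead] := h_at_finite_point char0 lam_inj i.
have := horizontal (Some i) (Posz m.+1 - 1).
rewrite /act principal_parts0 // subr0 lcoefZ_valN1 // [X in _ + X]conv_lead //.
rewrite lead (_ : Posz m.+1 - 1 = Posz m) /=; last by rewrite -addn1 PoszD addrK.
move=> eq; have : ((m.+1.*2.+1)%:R / 2%:R - 0%:R) * G1 (Some i) m.+1 = 0.
  by rewrite -eq -mul2n; field.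
have odd_a : odd (m.+1.*2.+1) by rewrite /= odd_double.
by move/eqP; rewrite mulf_eq0 (negbTE (odd_half_sub_nat_neq0 char0 0 odd_a)) => /eqP.
Qed.

Lemma infinite_component_vanishes : odd n -> G1 None 0%N = 0 ->
  (forall j, G1 (Some j) 0%N = 0) -> forall m, G1 None m = 0.
Proof.
move=> odd_n inf00 res0; elim/ltn_ind => m IH.
case: m IH => [|m] IH; first exact: inf00.
have [val1 lead] := h_at_infinity lam char0 n_gt0.
have := horizontal None (Posz m.+2).
rewrite /act principal_parts0 // subr0 lcoefZ_val1 // [X in _ + X]conv_lead //.
rewrite lead /= => eq; have : (n%:R / 2%:R - m.+1%:R) * G1 None m.+1 = 0.
  by rewrite -eq; ring.
by move/eqP; rewrite mulf_eq0 (negbTE (odd_half_sub_nat_neq0 char0 _ odd_n)) => /eqP.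
Qed.

End HorizontalSections.

Theorem mainTheorem8 (p : nat) (k : finFieldType) (K : fieldType)
    (absK : K -> R) (res : K -> k) (g : nat)
    (lam : 'I_(2 * g + 1) -> K) (G0 G1 : option 'I_(2 * g + 1) -> nat -> K) :
  WittFrac p absK res ->
  (1 <= g)%N ->
  (forall i, Rle (absK (lam i)) R1) ->
  (forall i j, i != j -> res (lam i) != res (lam j)) ->
  in_Bc absK G0 -> in_Bc absK G1 ->
  in_H lam G0 G1 ->
  (forall mu m, G0 mu m = 0) ->
  (forall l, (l <= 2 * g + 1)%N -> G1 None l = 0) ->
  (forall mu m, G0 mu m = 0) /\ (forall mu m, G1 mu m = 0).
Proof.
move=> [[_ [_ char0]] _ _ _] _ _ res_inj _ [_ [inf00 _]] [_ horizontal] G0_0 inf0.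
split=> //.
have n_gt0 : (0 < 2 * g + 1)%N by rewrite addn1.
have odd_n : odd (2 * g + 1) by rewrite addn1 /= mul2n odd_double.
have lam_inj i j : i != j -> lam i != lam j.
  by move/res_inj; apply: contra => /eqP ->.
have res0 := residues_vanish char0 lam_inj n_gt0 horizontal inf0.
case=> [i|].
  exact: finite_components_vanish char0 lam_inj n_gt0 horizontal res0 i.
exact: infinite_component_vanishes char0 lam_inj n_gt0 horizontal odd_n inf00 res0.
Qed.
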